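(* Let $\theta\mapsto (p_x(\theta),p_y(\theta),p_z(\theta))$ be differentiable with $p_x,p_y,p_z\ge0$ and $p_x+p_y+p_z\le1$, and consider the qubit channels \[ \Lambda_\theta(\rho)=(1-p_x-p_y-p_z)\rho+p_xX\rho X+p_yY\rho Y+p_zZ\rho Z, \] with $X,Y,Z$ the Pauli matrices. Let $q_\theta=(1-p_x(\theta)-p_y(\theta)-p_z(\theta),\,p_x(\theta),\,p_y(\theta),\,p_z(\theta))$, $\delta_\theta=\mathrm{d}q_\theta/\mathrm{d}\theta$ and $\Delta_\theta=\mathrm{d}\Lambda_\theta/\mathrm{d}\theta$. Then \[ G^{\min}_{\Lambda_\theta}(\Delta_\theta)=G^{\max}_{\Lambda_\theta}(\Delta_\theta)=J_{q_\theta}(\delta_\theta). \]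
   Context: A channel is a CPTP linear map; a tangent vector $\Delta$ at a channel $\Phi$ is a Hermiticity-preserving linear map with $\mathrm{tr}\,\Delta(X)=0$ for all $X$. A POVM $M$ is identified with the channel $\sigma\mapsto(\mathrm{tr}\,\sigma M_y)_y$. For a probability distribution $p$ on a finite set and real $\delta$ with $\sum_y\delta(y)=0$, $J_p(\delta)=\sum_y\delta(y)^2/p(y)$ (with $0/0=0$, $c/0=\infty$ for $c\neq0$). $G^{\min}_\Phi(\Delta):=\sup J_{M((\Phi\otimes\mathbf I)(\rho))}\big(M((\Delta\otimes\mathbf I)(\rho))\big)$ over all finite-dimensional auxiliary spaces $\mathcal K$, states $\rho$ on $\mathcal H_{\rm in}\otimes\mathcal K$ and POVMs $M$ on $\mathcal H_{\rm out}\otimes\mathcal K$. A classical tangent simulation of $(\Phi,\Delta)$ is a triple $(q,\delta,\Lambda)$: $q$ a probability distribution on a finite set $Y$, $\delta$ real on $Y$ with $\sum_y\delta(y)=0$, $\Lambda$ a channel from $\mathcal H_{\rm in}\otimes\mathbb C^Y$ to $\mathcal H_{\rm out}$ with $\Phi(X)=\Lambda(X\otimes q)$ and $\Delta(X)=\Lambda(X\otimes\delta)$ for all $X$ ($q,\delta$ as diagonal operators). $G^{\max}_\Phi(\Delta):=\inf J_q(\delta)$ over all such simulations ($\inf\emptyset=\infty$). *)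

From Stdlib Require Import Reals Lra Lia Arith.
Open Scope R_scope.

Record C := mkC { Re : R; Im : R }.
Definition RtoC (r : R) : C := mkC r 0.
Definition C0 : C := RtoC 0.
Definition C1 : C := RtoC 1.
Definition Ci : C := mkC 0 1.
Definition Cadd (a b : C) : C := mkC (Re a + Re b) (Im a + Im b).
Definition Copp (a : C) : C := mkC (- Re a) (- Im a).
Definition Cmul (a b : C) : C :=
  mkC (Re a * Re b - Im a * Im b) (Re a * Im b + Im a * Re b).
Definition Cconj (a : C) : C := mkC (Re a) (- Im a).

Fixpoint csum (n : nat) (f : nat -> C) : C :=
  match n with O => C0 | S m => Cadd (csum m f) (f m) end.
Fixpoint rsum (n : nat) (f : nat -> R) : R :=
  match n with O => 0 | S m => rsum m f + f m end.

(* A matrix of size n is a function nat -> nat -> C of which only the entries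
   with indices < n are meaningful. *)
Definition Mat := nat -> nat -> C.
Definition meq (n : nat) (A B : Mat) : Prop :=
  forall i j, (i < n)%nat -> (j < n)%nat -> A i j = B i j.
Definition mmul (n : nat) (A B : Mat) : Mat :=
  fun i j => csum n (fun k => Cmul (A i k) (B k j)).
Definition mtrace (n : nat) (A : Mat) : C := csum n (fun i => A i i).
Definition Hermitian (n : nat) (A : Mat) : Prop :=
  forall i j, (i < n)%nat -> (j < n)%nat -> A i j = Cconj (A j i).
Definition PSD (n : nat) (A : Mat) : Prop :=
  Hermitian n A /\
  forall v : nat -> C,
    0 <= Re (csum n (fun i => csum n (fun j =>
                 Cmul (Cmul (Cconj (v i)) (A i j)) (v j)))).
Definition state (n : nat) (rho : Mat) : Prop := PSD n rho /\ mtrace n rho = C1.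
Definition POVM (n m : nat) (M : nat -> Mat) : Prop :=
  (forall y, (y < m)%nat -> PSD n (M y)) /\
  forall i j, (i < n)%nat -> (j < n)%nat ->
    csum m (fun y => M y i j) = (if Nat.eqb i j then C1 else C0).

(* A linear map M_din -> M_dout is given by its coefficients T:
   (T X)_{ij} = sum_{k,l < din} T i j k l * X_{kl}. *)
Definition LMap := nat -> nat -> nat -> nat -> C.
Definition apply (din : nat) (T : LMap) (X : Mat) : Mat :=
  fun i j => csum din (fun k => csum din (fun l => Cmul (T i j k l) (X k l))).

(* Tensor-product index convention: (i,a) in [din] x [k]  <->  i*k + a. *)
(* (T (x) id_k)(X) for X on C^din (x) C^k. *)
Definition tens_id (din k : nat) (T : LMap) (X : Mat) : Mat :=
  fun r c => apply din T (fun i j => X (i * k + r mod k)%nat (j * k + c mod k)%nat)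
                   (r / k)%nat (c / k)%nat.
(* X (x) diag(v) on C^d (x) C^n, v a real vector on {0..n-1}. *)
Definition ten_diag (n : nat) (X : Mat) (v : nat -> R) : Mat :=
  fun r c => if Nat.eqb (r mod n) (c mod n)
             then Cmul (X (r / n)%nat (c / n)%nat) (RtoC (v (r mod n)))
             else C0.

Definition CP (din dout : nat) (T : LMap) : Prop :=
  forall (k : nat) (X : Mat), PSD (din * k) X -> PSD (dout * k) (tens_id din k T X).
Definition TP (din dout : nat) (T : LMap) : Prop :=
  forall X : Mat, mtrace dout (apply din T X) = mtrace din X.
Definition channel (din dout : nat) (T : LMap) : Prop := CP din dout T /\ TP din dout T.

Inductive ER := Fin (r : R) | Inf.
Definition ERadd (x y : ER) : ER :=
  match x, y with Fin a, Fin b => Fin (a + b) | _, _ => Inf end.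
Definition ERle (x y : ER) : Prop :=
  match x, y with
  | _, Inf => True
  | Inf, Fin _ => False
  | Fin a, Fin b => a <= b
  end.
Definition is_sup (S : ER -> Prop) (v : ER) : Prop :=
  (forall x, S x -> ERle x v) /\ (forall u, (forall x, S x -> ERle x u) -> ERle v u).
Definition is_inf (S : ER -> Prop) (v : ER) : Prop :=
  (forall x, S x -> ERle v x) /\ (forall u, (forall x, S x -> ERle u x) -> ERle u v).

(* d^2/p with 0/0 = 0 and c/0 = infinity for c <> 0 *)
Definition Jterm (p d : R) : ER :=
  if Req_dec_T p 0 then (if Req_dec_T d 0 then Fin 0 else Inf) else Fin (d * d / p).
Fixpoint Jfun (n : nat) (p d : nat -> R) : ER :=
  match n with O => Fin 0 | S m => ERadd (Jfun m p d) (Jterm (p m) (d m)) end.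

Definition probdist (n : nat) (q : nat -> R) : Prop :=
  (forall y, (y < n)%nat -> 0 <= q y) /\ rsum n q = 1.

(* values J_{M((Phi(x)I)(rho))}(M((Delta(x)I)(rho))) over aux. dim k, states
   rho on C^din (x) C^k, POVMs M on C^dout (x) C^k with m outcomes *)
Definition Gmin_values (din dout : nat) (Phi Delta : LMap) (x : ER) : Prop :=
  exists (k : nat) (rho : Mat) (m : nat) (M : nat -> Mat),
    state (din * k) rho /\ POVM (dout * k) m M /\
    x = Jfun m
          (fun y => Re (mtrace (dout * k) (mmul (dout * k) (tens_id din k Phi rho) (M y))))
          (fun y => Re (mtrace (dout * k) (mmul (dout * k) (tens_id din k Delta rho) (M y)))).
Definition Gmin_is (din dout : nat) (Phi Delta : LMap) (v : ER) : Prop :=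
  is_sup (Gmin_values din dout Phi Delta) v.

Definition tangent_sim (din dout : nat) (Phi Delta : LMap)
    (n : nat) (q delta : nat -> R) (L : LMap) : Prop :=
  probdist n q /\ rsum n delta = 0 /\ channel (din * n) dout L /\
  (forall X : Mat, meq dout (apply din Phi X) (apply (din * n) L (ten_diag n X q))) /\
  (forall X : Mat, meq dout (apply din Delta X) (apply (din * n) L (ten_diag n X delta))).
Definition Gmax_values (din dout : nat) (Phi Delta : LMap) (x : ER) : Prop :=
  exists (n : nat) (q delta : nat -> R) (L : LMap),
    tangent_sim din dout Phi Delta n q delta L /\ x = Jfun n q delta.
Definition Gmax_is (din dout : nat) (Phi Delta : LMap) (v : ER) : Prop :=
  is_inf (Gmax_values din dout Phi Delta) v.

(* sigma_0 = I, sigma_1 = X, sigma_2 = Y, sigma_3 = Z *)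
Definition pauli (y : nat) : Mat :=
  fun i j =>
    match y, i, j with
    | 0, 0, 0 => C1 | 0, 1, 1 => C1
    | 1, 0, 1 => C1 | 1, 1, 0 => C1
    | 2, 0, 1 => Copp Ci | 2, 1, 0 => Ci
    | 3, 0, 0 => C1 | 3, 1, 1 => Copp C1
    | _, _, _ => C0
    end%nat.
(* rho |-> sum_y q_y sigma_y rho sigma_y *)
Definition pauli_chan (q : nat -> R) : LMap :=
  fun i j k l => csum 4 (fun y => Cmul (Cmul (RtoC (q y)) (pauli y i k)) (pauli y l j)).
Definition qvec (px py pz : R) : nat -> R :=
  fun y => match y with
           | O => 1 - px - py - pz | S O => px | S (S O) => py
           | S (S (S O)) => pz | _ => 0 end.

From Stdlib Require Import Reals Lra Lia FunctionalExtensionality.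
Open Scope R_scope.

(* Both quantities equal the classical Fisher information [J_q(delta)] because the Pauli
   channel and the classical pair [(q, delta)] can be converted into each other.  The
   statistics of any measurement [M] of [(Lambda_q (x) id)(rho)] arise from [(q, delta)]
   through the stochastic matrix [c y z = tr ((sigma_y (x) 1) rho (sigma_y (x) 1) M_z)];
   conversely, feeding half of a Bell pair into any classical simulation [(q', delta', L)]
   and measuring in the Bell basis produces [(q, delta)] from [(q', delta')] through a
   stochastic matrix.  Since [J] cannot increase under stochastic maps, this gives
   [G^min <= J_q(delta) <= G^max].  Both bounds are attained: the Bell-pair strategy
   reads off [(q, delta)] exactly, and [X (x) |y><y| |-> sigma_y X sigma_y] is a
   simulation with [(q, delta)] itself.  Linearity of [q |-> Lambda_q] identifies the
   derivative [Delta] with [Lambda_delta]. *)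

Lemma C_ext (a b : C) : Re a = Re b -> Im a = Im b -> a = b.
Proof. destruct a, b; simpl; intros; subst; reflexivity. Qed.

Ltac Csimpl := unfold Cadd, Cmul, Copp, Cconj, RtoC, C0, C1, Ci in *; simpl in *.
Ltac Cring := apply C_ext; Csimpl; ring.

Lemma csum_ext n f g : (forall i, (i < n)%nat -> f i = g i) -> csum n f = csum n g.
Proof. induction n; simpl; intros; auto. rewrite IHn, H; auto. Qed.

Lemma Re_csum n f : Re (csum n f) = rsum n (fun i => Re (f i)).
Proof. induction n; simpl; auto. rewrite IHn; reflexivity. Qed.

Lemma Im_csum n f : Im (csum n f) = rsum n (fun i => Im (f i)).
Proof. induction n; simpl; auto. rewrite IHn; reflexivity. Qed.

Lemma csum_add n f g : csum n (fun i => Cadd (f i) (g i)) = Cadd (csum n f) (csum n g).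
Proof. induction n; simpl. Cring. rewrite IHn. Cring. Qed.

Lemma csum_mul_l n c f : Cmul c (csum n f) = csum n (fun i => Cmul c (f i)).
Proof. induction n; simpl. Cring. rewrite <- IHn. Cring. Qed.

Lemma csum_mul_r n c f : Cmul (csum n f) c = csum n (fun i => Cmul (f i) c).
Proof. induction n; simpl. Cring. rewrite <- IHn. Cring. Qed.

Lemma csum_conj n f : Cconj (csum n f) = csum n (fun i => Cconj (f i)).
Proof. induction n; simpl. Cring. rewrite <- IHn. Cring. Qed.

Lemma csum_zero n f : (forall i, (i < n)%nat -> f i = C0) -> csum n f = C0.
Proof. induction n; simpl; intros; auto. rewrite IHn, H; auto. Cring. Qed.

Lemma csum_swap n m (f : nat -> nat -> C) :
  csum n (fun i => csum m (fun j => f i j)) = csum m (fun j => csum n (fun i => f i j)).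
Proof.
  induction n; simpl.
  - symmetry; apply csum_zero; auto.
  - rewrite IHn, <- csum_add. reflexivity.
Qed.

Lemma csum_app m k f : csum (m + k) f = Cadd (csum m f) (csum k (fun a => f (m + a)%nat)).
Proof.
  induction k; simpl.
  - rewrite Nat.add_0_r. Cring.
  - rewrite Nat.add_succ_r; simpl. rewrite IHk. Cring.
Qed.

Lemma csum_block n k f :
  csum (n * k) f = csum n (fun i => csum k (fun a => f (i * k + a)%nat)).
Proof.
  induction n; simpl; auto.
  replace (k + n * k)%nat with (n * k + k)%nat by lia.
  rewrite csum_app, IHn. reflexivity.
Qed.

Lemma csum_single n p f : (p < n)%nat ->
  (forall i, (i < n)%nat -> i <> p -> f i = C0) -> csum n f = f p.
Proof.
  induction n; intros; [lia|]. simpl.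
  destruct (Nat.eq_dec p n).
  - subst. rewrite csum_zero. Cring. intros; apply H0; lia.
  - rewrite IHn by (auto; lia). rewrite (H0 n) by lia. Cring.
Qed.

Lemma csum_prod n m f g :
  Cmul (csum n f) (csum m g) = csum n (fun i => csum m (fun j => Cmul (f i) (g j))).
Proof. rewrite csum_mul_r. apply csum_ext; intros. apply csum_mul_l. Qed.

Lemma rsum_ext n f g : (forall i, (i < n)%nat -> f i = g i) -> rsum n f = rsum n g.
Proof. induction n; simpl; intros; auto. rewrite IHn, H; auto. Qed.

Lemma rsum_le n f g : (forall i, (i < n)%nat -> f i <= g i) -> rsum n f <= rsum n g.
Proof.
  induction n; simpl; intros; [lra|].
  assert (f n <= g n) by (apply H; lia).
  assert (rsum n f <= rsum n g) by (apply IHn; intros; apply H; lia). lra.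
Qed.

Lemma rsum_zero n f : (forall i, (i < n)%nat -> f i = 0) -> rsum n f = 0.
Proof. induction n; simpl; intros; auto. rewrite IHn, H by (auto; lia). ring. Qed.

Lemma rsum_nonneg n f : (forall i, (i < n)%nat -> 0 <= f i) -> 0 <= rsum n f.
Proof.
  intros. replace 0 with (rsum n (fun _ => 0)) by (apply rsum_zero; auto).
  apply rsum_le; auto.
Qed.

Lemma rsum_nonneg_eq0 n f : (forall i, (i < n)%nat -> 0 <= f i) -> rsum n f = 0 ->
  forall i, (i < n)%nat -> f i = 0.
Proof.
  induction n; simpl; intros Hf Hs i Hi; [lia|].
  assert (0 <= rsum n f) by (apply rsum_nonneg; intros; apply Hf; lia).
  assert (0 <= f n) by (apply Hf; lia).
  destruct (Nat.eq_dec i n); [subst; lra|].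
  apply IHn; [intros; apply Hf; lia | lra | lia].
Qed.

Lemma rsum_add n f g : rsum n (fun i => f i + g i) = rsum n f + rsum n g.
Proof. induction n; simpl; [lra|]. rewrite IHn; lra. Qed.

Lemma rsum_scal n c f : rsum n (fun i => c * f i) = c * rsum n f.
Proof. induction n; simpl; [lra|]. rewrite IHn; lra. Qed.

Lemma rsum_swap n m (f : nat -> nat -> R) :
  rsum n (fun i => rsum m (fun j => f i j)) = rsum m (fun j => rsum n (fun i => f i j)).
Proof.
  induction n; simpl.
  - symmetry; apply rsum_zero; auto.
  - rewrite IHn, <- rsum_add. reflexivity.
Qed.

Lemma rsum_single n p v : (p < n)%nat ->
  rsum n (fun y => v y * (if Nat.eqb y p then 1 else 0)) = v p.
Proof.
  intros Hp. induction n; simpl; [lia|].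
  destruct (Nat.eqb_spec n p).
  - subst. rewrite rsum_zero; [ring|].
    intros i Hi. destruct (Nat.eqb_spec i p); [lia | ring].
  - rewrite IHn by lia. ring.
Qed.

Lemma div_block k i a : (a < k)%nat -> ((i * k + a) / k = i)%nat.
Proof. intros. rewrite Nat.div_add_l by lia. rewrite Nat.div_small by lia. lia. Qed.

Lemma mod_block k i a : (a < k)%nat -> ((i * k + a) mod k = a)%nat.
Proof. intros. rewrite Nat.add_comm, Nat.Div0.mod_add. apply Nat.mod_small; auto. Qed.

Lemma block_lt d k i a : (i < d)%nat -> (a < k)%nat -> (i * k + a < d * k)%nat.
Proof. intros. nia. Qed.

Lemma div_lt_block d k p : (p < d * k)%nat -> (p / k < d)%nat.
Proof. intros. apply Nat.Div0.div_lt_upper_bound. lia. Qed.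

Lemma mod_lt_block d k p : (p < d * k)%nat -> (p mod k < k)%nat.
Proof. intros. apply Nat.mod_upper_bound. intro; subst; lia. Qed.
(** * Positive semidefinite matrices *)

Definition sesq (n : nat) (A : Mat) (v w : nat -> C) : C :=
  csum n (fun i => csum n (fun j => Cmul (Cmul (Cconj (v i)) (A i j)) (w j))).
Definition basis_vec (p : nat) (s : C) : nat -> C := fun i => if Nat.eqb i p then s else C0.
Definition vadd (v w : nat -> C) : nat -> C := fun i => Cadd (v i) (w i).

Lemma PSD_sesq n A : PSD n A -> forall v, 0 <= Re (sesq n A v v).
Proof. intros [_ H] v. apply H. Qed.

Lemma sesq_ext n A A' v v' w w' :
  (forall i j, (i < n)%nat -> (j < n)%nat -> A i j = A' i j) ->
  (forall i, (i < n)%nat -> v i = v' i) -> (forall i, (i < n)%nat -> w i = w' i) ->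
  sesq n A v w = sesq n A' v' w'.
Proof.
  intros. unfold sesq. apply csum_ext; intros. apply csum_ext; intros.
  rewrite H, H0, H1 by auto. reflexivity.
Qed.

Lemma sesq_zero n A v w : (forall i j, (i < n)%nat -> (j < n)%nat -> A i j = C0) ->
  sesq n A v w = C0.
Proof.
  intros. unfold sesq. apply csum_zero; intros. apply csum_zero; intros.
  rewrite H by auto. Cring.
Qed.

Lemma PSD_ext n A B : (forall i j, (i < n)%nat -> (j < n)%nat -> A i j = B i j) ->
  PSD n A -> PSD n B.
Proof.
  intros H [HH HQ]. split.
  - intros i j Hi Hj. rewrite <- !H by auto. auto.
  - intros v. fold (sesq n B v v).
    rewrite (sesq_ext n B A v v v v); [apply HQ | intros; symmetry; auto | auto | auto].
Qed.

Lemma sesq_add_l n A v w u : sesq n A (vadd v w) u = Cadd (sesq n A v u) (sesq n A w u).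
Proof.
  unfold sesq, vadd. rewrite <- csum_add. apply csum_ext; intros.
  rewrite <- csum_add. apply csum_ext; intros. Cring.
Qed.

Lemma sesq_add_r n A v w u : sesq n A u (vadd v w) = Cadd (sesq n A u v) (sesq n A u w).
Proof.
  unfold sesq, vadd. rewrite <- csum_add. apply csum_ext; intros.
  rewrite <- csum_add. apply csum_ext; intros. Cring.
Qed.

Lemma sesq_basis_l n A p s w : (p < n)%nat ->
  sesq n A (basis_vec p s) w = Cmul (Cconj s) (csum n (fun j => Cmul (A p j) (w j))).
Proof.
  intros Hp. unfold sesq. rewrite (csum_single n p); auto.
  - unfold basis_vec. rewrite Nat.eqb_refl, csum_mul_l. apply csum_ext; intros. Cring.
  - intros i _ Hi. unfold basis_vec. apply Nat.eqb_neq in Hi. rewrite Hi.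
    apply csum_zero; intros. Cring.
Qed.

Lemma sesq_basis_r n A p s v : (p < n)%nat ->
  sesq n A v (basis_vec p s) = Cmul (csum n (fun i => Cmul (Cconj (v i)) (A i p))) s.
Proof.
  intros Hp. unfold sesq. rewrite csum_mul_r. apply csum_ext; intros.
  rewrite (csum_single n p); auto.
  - unfold basis_vec. rewrite Nat.eqb_refl. reflexivity.
  - intros j _ Hj. unfold basis_vec. apply Nat.eqb_neq in Hj. rewrite Hj. Cring.
Qed.

Lemma sesq_basis n A p q s t : (p < n)%nat -> (q < n)%nat ->
  sesq n A (basis_vec p s) (basis_vec q t) = Cmul (Cmul (Cconj s) (A p q)) t.
Proof.
  intros. rewrite sesq_basis_l by auto. rewrite (csum_single n q); auto.
  - unfold basis_vec. rewrite Nat.eqb_refl. Cring.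
  - intros j _ Hj. unfold basis_vec. apply Nat.eqb_neq in Hj. rewrite Hj. Cring.
Qed.

Lemma PSD_diag n A p : PSD n A -> (p < n)%nat -> 0 <= Re (A p p) /\ Im (A p p) = 0.
Proof.
  intros HA Hp. split.
  - pose proof (PSD_sesq n A HA (basis_vec p C1)). rewrite sesq_basis in H by auto.
    Csimpl. nra.
  - destruct HA as [HH _]. pose proof (HH p p Hp Hp).
    apply (f_equal Im) in H. Csimpl. lra.
Qed.

Lemma PSD_diag_real n A p : PSD n A -> (p < n)%nat -> A p p = mkC (Re (A p p)) 0.
Proof. intros HA Hp. apply C_ext; simpl; auto. apply (PSD_diag n A p HA Hp). Qed.

(* Test the form on [s e_m + e_j] with [s] a suitable negative multiple of [A m j]. *)
Lemma PSD_diag0_row n A m : PSD n A -> (m < n)%nat -> A m m = C0 ->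
  forall j, (j < n)%nat -> A m j = C0.
Proof.
  intros HA Hm Hmm j Hj.
  set (a := A m j).
  set (N := Re a * Re a + Im a * Im a).
  assert (HN : N = 0).
  { destruct (Req_dec N 0); auto. exfalso.
    assert (N > 0) by (unfold N in *; nra).
    set (t := (Re (A j j) + 1) / (2 * N)).
    set (s := mkC (- t * Re a) (- t * Im a)).
    pose proof (PSD_sesq n A HA (vadd (basis_vec m s) (basis_vec j C1))).
    rewrite sesq_add_l, !sesq_add_r, !sesq_basis in H1 by auto.
    destruct HA as [HH _]. rewrite (HH j m) in H1 by auto. fold a in H1.
    rewrite Hmm in H1. unfold s in H1. Csimpl.
    assert (t * N = (Re (A j j) + 1) / 2) by (unfold t; field; lra).
    unfold N in H2. nra. }
  unfold N in HN. apply C_ext; Csimpl; nra.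
Qed.

Definition schur_step (A : Mat) (m : nat) (a : R) : Mat :=
  fun i j => Cadd (A i j) (Cmul (RtoC (- / a)) (Cmul (A i m) (Cconj (A j m)))).

Lemma schur_step_PSD n A m : PSD n A -> (m < n)%nat -> 0 < Re (A m m) ->
  PSD n (schur_step A m (Re (A m m))).
Proof.
  intros HA Hm Ha. pose proof (PSD_diag_real n A m HA Hm) as Amm.
  destruct HA as [HH HQ]. set (a := Re (A m m)) in *. split.
  - intros i j Hi Hj. unfold schur_step. rewrite (HH i j Hi Hj). Cring.
  - intros v.
    set (beta := csum n (fun j => Cmul (A m j) (v j))).
    set (s := Cmul (RtoC (- / a)) beta).
    pose proof (HQ (vadd v (basis_vec m s))) as H.
    fold (sesq n A (vadd v (basis_vec m s)) (vadd v (basis_vec m s))) in H.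
    rewrite sesq_add_l, !sesq_add_r, !sesq_basis, sesq_basis_l, sesq_basis_r in H by auto.
    fold beta in H.
    assert (Hg : csum n (fun i => Cmul (Cconj (v i)) (A i m)) = Cconj beta).
    { unfold beta. rewrite csum_conj. apply csum_ext; intros. rewrite (HH i m) by auto. Cring. }
    rewrite Hg in H.
    assert (Hb : sesq n (schur_step A m a) v v =
                 Cadd (sesq n A v v) (Cmul (RtoC (- / a)) (Cmul (Cconj beta) beta))).
    { rewrite <- Hg. unfold beta. rewrite csum_prod, csum_mul_l.
      unfold sesq. rewrite <- csum_add. apply csum_ext; intros i Hi.
      rewrite csum_mul_l, <- csum_add. apply csum_ext; intros j Hj.
      unfold schur_step. rewrite (HH m j) by auto. Cring. }
    fold (sesq n (schur_step A m a) v v). rewrite Hb.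
    rewrite Amm in H. unfold s in H. clear Hb Hg.
    destruct (sesq n A v v) as [x y]. destruct beta as [br bi]. Csimpl.
    assert (0 < a) by exact Ha.
    match goal with |- 0 <= ?g => match type of H with 0 <= ?h =>
      replace g with h by (field; lra) end end.
    exact H.
Qed.

Lemma mtrace_mmul_rank1_split n A A' B c w :
  (forall i j, (i < n)%nat -> (j < n)%nat ->
     A i j = Cadd (A' i j) (Cmul c (Cmul (w i) (Cconj (w j))))) ->
  mtrace n (mmul n A B) = Cadd (mtrace n (mmul n A' B)) (Cmul c (sesq n B w w)).
Proof.
  intros H. unfold mtrace, mmul, sesq.
  rewrite (csum_swap n n (fun i j => Cmul (Cmul (Cconj (w i)) (B i j)) (w j))).
  rewrite csum_mul_l, <- csum_add. apply csum_ext; intros i Hi.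
  rewrite csum_mul_l, <- csum_add. apply csum_ext; intros j Hj.
  rewrite H by auto. Cring.
Qed.

(* Induction on the number [m] of leading zero rows and columns of [A]: one Schur
   complement step (or nothing, if the next diagonal entry vanishes) zeroes row [m],
   and the rank-one part it removes contributes [sesq B w w / A m m >= 0]. *)
Lemma mtrace_mmul_PSD_aux n B : PSD n B -> forall d m A, (m + d = n)%nat -> PSD n A ->
  (forall i j, (i < n)%nat -> (j < n)%nat -> (i < m \/ j < m)%nat -> A i j = C0) ->
  0 <= Re (mtrace n (mmul n A B)).
Proof.
  intros HB d. induction d; intros m A Hmd HA H0.
  - unfold mtrace, mmul. rewrite csum_zero; [simpl; lra|].
    intros. apply csum_zero. intros. rewrite H0 by lia. Cring.
  - assert (Hm : (m < n)%nat) by lia.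
    pose proof (PSD_diag_real n A m HA Hm) as Amm.
    destruct (PSD_diag n A m HA Hm) as [Hre _].
    destruct (Rle_lt_or_eq_dec _ _ Hre) as [Hpos | Hz].
    + set (a := Re (A m m)) in *.
      rewrite (mtrace_mmul_rank1_split n A (schur_step A m a) B (RtoC (/ a)) (fun i => A i m))
        by (intros; unfold schur_step; Cring).
      assert (0 <= Re (sesq n B (fun i => A i m) (fun i => A i m))) by (apply PSD_sesq; auto).
      assert (0 <= Re (mtrace n (mmul n (schur_step A m a) B))).
      { apply (IHd (S m)); [lia | apply schur_step_PSD; auto |].
        intros i j Hi Hj Hij. destruct HA as [HH _]. unfold schur_step.
        destruct (Nat.eq_dec i m); destruct (Nat.eq_dec j m); subst.
        - rewrite Amm. apply C_ext; Csimpl; field; lra.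
        - rewrite (HH m j), Amm by auto. apply C_ext; Csimpl; field; lra.
        - rewrite (HH i m), Amm by auto. apply C_ext; Csimpl; field; lra.
        - destruct Hij as [Hij|Hij];
            [rewrite (H0 i j), (H0 i m) by (auto; lia) | rewrite (H0 i j), (H0 j m) by (auto; lia)];
            Cring. }
      Csimpl. assert (0 <= / a) by (apply Rlt_le, Rinv_0_lt_compat; auto). nra.
    + assert (A m m = C0) by (rewrite Amm, <- Hz; reflexivity).
      apply (IHd (S m)); [lia | exact HA |].
      intros i j Hi Hj Hij.
      destruct (Nat.eq_dec i m) as [->|]; [apply (PSD_diag0_row n); auto|].
      destruct (Nat.eq_dec j m) as [->|].
      * destruct HA as [HH HQ]. rewrite HH by auto.
        rewrite (PSD_diag0_row n A m) by (auto; split; auto). Cring.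
      * apply H0; auto; lia.
Qed.

Lemma mtrace_mmul_PSD n A B : PSD n A -> PSD n B -> 0 <= Re (mtrace n (mmul n A B)).
Proof. intros. apply (mtrace_mmul_PSD_aux n B H0 n 0 A); auto. intros; lia. Qed.

Lemma rank1_PSD n c u : 0 <= c ->
  PSD n (fun r s => Cmul (RtoC c) (Cmul (u r) (Cconj (u s)))).
Proof.
  intros Hc. split.
  - intros i j _ _. Cring.
  - intros v. fold (sesq n (fun r s => Cmul (RtoC c) (Cmul (u r) (Cconj (u s)))) v v).
    set (z := csum n (fun i => Cmul (Cconj (v i)) (u i))).
    assert (E : sesq n (fun r s => Cmul (RtoC c) (Cmul (u r) (Cconj (u s)))) v v =
                Cmul (RtoC c) (Cmul z (Cconj z))).
    { unfold z. rewrite csum_conj, csum_prod, csum_mul_l. unfold sesq. apply csum_ext; intros.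
      rewrite csum_mul_l. apply csum_ext; intros. Cring. }
    rewrite E. destruct z as [x y]. Csimpl. nra.
Qed.
(** * Completely positive maps in Kraus form *)

Lemma tens_id_block din k T X i j a b : (a < k)%nat -> (b < k)%nat ->
  tens_id din k T X (i * k + a)%nat (j * k + b)%nat =
  apply din T (fun i' j' => X (i' * k + a)%nat (j' * k + b)%nat) i j.
Proof. intros. unfold tens_id. rewrite !div_block, !mod_block by auto. reflexivity. Qed.

Lemma sesq_block d k A v w :
  sesq (d * k) A v w = csum k (fun a => csum k (fun b =>
    sesq d (fun i j => A (i * k + a)%nat (j * k + b)%nat)
      (fun i => v (i * k + a)%nat) (fun j => w (j * k + b)%nat))).
Proof.
  unfold sesq. rewrite csum_block.
  transitivity (csum d (fun i => csum k (fun a => csum d (fun j => csum k (fun b =>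
     Cmul (Cmul (Cconj (v (i * k + a)%nat)) (A (i * k + a)%nat (j * k + b)%nat))
          (w (j * k + b)%nat)))))).
  { apply csum_ext; intros. apply csum_ext; intros. apply csum_block. }
  rewrite csum_swap. apply csum_ext; intros a Ha.
  transitivity (csum d (fun i => csum k (fun b => csum d (fun j =>
     Cmul (Cmul (Cconj (v (i * k + a)%nat)) (A (i * k + a)%nat (j * k + b)%nat))
          (w (j * k + b)%nat))))).
  { apply csum_ext; intros. apply csum_swap. }
  apply csum_swap.
Qed.

Lemma sesq_csum n r F v w :
  sesq n (fun i j => csum r (fun t => F t i j)) v w = csum r (fun t => sesq n (F t) v w).
Proof.
  unfold sesq. symmetry. rewrite csum_swap. apply csum_ext; intros.
  rewrite csum_swap. apply csum_ext; intros.
  rewrite csum_mul_l, csum_mul_r. apply csum_ext; intros. Cring.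
Qed.

Definition adj_apply (n : nat) (K : Mat) (v : nat -> C) : nat -> C :=
  fun k => csum n (fun j => Cmul (Cconj (K j k)) (v j)).

Lemma sesq_conjugate n m K X v w :
  sesq n (fun i j => csum m (fun k => csum m (fun l =>
        Cmul (Cmul (K i k) (X k l)) (Cconj (K j l))))) v w =
  sesq m X (adj_apply n K v) (adj_apply n K w).
Proof.
  unfold sesq, adj_apply. symmetry.
  transitivity (csum m (fun k => csum m (fun l => csum n (fun i => csum n (fun j =>
     Cmul (Cmul (Cconj (v i)) (Cmul (Cmul (K i k) (X k l)) (Cconj (K j l)))) (w j)))))).
  { apply csum_ext; intros k Hk. apply csum_ext; intros l Hl.
    rewrite csum_conj, csum_mul_r, csum_mul_r. apply csum_ext; intros i Hi.
    rewrite csum_mul_l. apply csum_ext; intros j Hj. Cring. }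
  rewrite csum_swap.
  transitivity (csum m (fun l => csum n (fun i => csum m (fun k => csum n (fun j =>
     Cmul (Cmul (Cconj (v i)) (Cmul (Cmul (K i k) (X k l)) (Cconj (K j l)))) (w j)))))).
  { apply csum_ext; intros. apply csum_swap. }
  rewrite csum_swap. apply csum_ext; intros i Hi.
  transitivity (csum m (fun l => csum n (fun j => csum m (fun k =>
     Cmul (Cmul (Cconj (v i)) (Cmul (Cmul (K i k) (X k l)) (Cconj (K j l)))) (w j))))).
  { apply csum_ext; intros. apply csum_swap. }
  rewrite csum_swap. apply csum_ext; intros j Hj.
  symmetry. rewrite csum_mul_l, csum_mul_r, csum_swap. apply csum_ext; intros k Hk.
  rewrite csum_mul_l, csum_mul_r. apply csum_ext; intros l Hl. Cring.
Qed.

Definition kraus_form (din dout : nat) (T : LMap) (r : nat) (K : nat -> Mat) : Prop :=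
  forall i j k l, (i < dout)%nat -> (j < dout)%nat -> (k < din)%nat -> (l < din)%nat ->
    T i j k l = csum r (fun t => Cmul (K t i k) (Cconj (K t j l))).

Section Kraus.
Variables (din dout r : nat) (T : LMap) (K : nat -> Mat).
Hypothesis HK : kraus_form din dout T r K.

Lemma kraus_tens_hermitian kk X : Hermitian (din * kk) X ->
  Hermitian (dout * kk) (tens_id din kk T X).
Proof.
  intros HX p q Hp Hq. unfold tens_id, apply.
  pose proof (div_lt_block _ _ _ Hp). pose proof (div_lt_block _ _ _ Hq).
  pose proof (mod_lt_block _ _ _ Hp). pose proof (mod_lt_block _ _ _ Hq).
  rewrite csum_conj, csum_swap. apply csum_ext; intros k Hk.
  rewrite csum_conj. apply csum_ext; intros l Hl.
  rewrite (HK (p / kk)%nat), (HK (q / kk)%nat) by auto.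
  rewrite (HX (l * kk + p mod kk)%nat) by (apply block_lt; auto).
  replace (csum r (fun t => Cmul (K t (p / kk)%nat l) (Cconj (K t (q / kk)%nat k))))
    with (Cconj (csum r (fun t => Cmul (K t (q / kk)%nat k) (Cconj (K t (p / kk)%nat l)))))
    by (rewrite csum_conj; apply csum_ext; intros; Cring).
  Cring.
Qed.

Lemma kraus_tens_sesq kk X v :
  sesq (dout * kk) (tens_id din kk T X) v v =
  csum r (fun t => sesq (din * kk) X
    (fun s => csum dout (fun j => Cmul (Cconj (K t j (s / kk)%nat)) (v (j * kk + s mod kk)%nat)))
    (fun s => csum dout (fun j => Cmul (Cconj (K t j (s / kk)%nat)) (v (j * kk + s mod kk)%nat)))).
Proof.
  rewrite sesq_block.
  transitivity (csum kk (fun a => csum kk (fun b => csum r (fun t =>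
    sesq din (fun i j => X (i * kk + a)%nat (j * kk + b)%nat)
      (adj_apply dout (K t) (fun i => v (i * kk + a)%nat))
      (adj_apply dout (K t) (fun j => v (j * kk + b)%nat)))))).
  { apply csum_ext; intros a Ha. apply csum_ext; intros b Hb.
    transitivity (sesq dout (fun i j => csum r (fun t => csum din (fun k => csum din (fun l =>
          Cmul (Cmul (K t i k) (X (k * kk + a)%nat (l * kk + b)%nat)) (Cconj (K t j l))))))
        (fun i => v (i * kk + a)%nat) (fun j => v (j * kk + b)%nat)).
    - apply sesq_ext; try (intros; reflexivity).
      intros i j Hi Hj. rewrite tens_id_block by auto. unfold apply.
      symmetry. rewrite csum_swap. apply csum_ext; intros k Hk. rewrite csum_swap.
      apply csum_ext; intros l Hl. rewrite HK by auto. rewrite csum_mul_r.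
      apply csum_ext; intros. Cring.
    - rewrite sesq_csum. apply csum_ext; intros t Ht. apply sesq_conjugate. }
  etransitivity. { apply csum_ext; intros a Ha. apply csum_swap. }
  rewrite csum_swap. apply csum_ext; intros t Ht.
  rewrite sesq_block. apply csum_ext; intros a Ha. apply csum_ext; intros b Hb.
  apply sesq_ext; [intros; reflexivity | |];
    intros k Hk; unfold adj_apply; rewrite div_block, mod_block by auto; reflexivity.
Qed.

Lemma kraus_CP : CP din dout T.
Proof.
  intros kk X [HX QX]. split.
  - apply kraus_tens_hermitian; auto.
  - intros v. fold (sesq (dout * kk) (tens_id din kk T X) v v).
    rewrite kraus_tens_sesq, Re_csum. apply rsum_nonneg; intros. apply QX.
Qed.

End Kraus.

(** * Outcome probabilities of a measured channel *)

Definition outcome_prob (din dout k : nat) (T : LMap) (rho N : Mat) : R :=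
  Re (mtrace (dout * k) (mmul (dout * k) (tens_id din k T rho) N)).

Lemma tens_id_trace din dout T kk X : TP din dout T ->
  mtrace (dout * kk) (tens_id din kk T X) = mtrace (din * kk) X.
Proof.
  intros HT. unfold mtrace. rewrite !csum_block, (csum_swap dout), (csum_swap din).
  apply csum_ext; intros a Ha.
  transitivity (mtrace dout (apply din T (fun i' j' => X (i' * kk + a)%nat (j' * kk + a)%nat))).
  { unfold mtrace. apply csum_ext; intros. rewrite tens_id_block by auto. reflexivity. }
  rewrite HT. reflexivity.
Qed.

Lemma POVM_mtrace_sum n m M A : POVM n m M ->
  csum m (fun y => mtrace n (mmul n A (M y))) = mtrace n A.
Proof.
  intros [_ H]. unfold mtrace, mmul. rewrite csum_swap. apply csum_ext; intros r Hr.
  rewrite csum_swap, (csum_single n r); auto.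
  - rewrite <- csum_mul_l, H, Nat.eqb_refl by auto. Cring.
  - intros s Hs Hsr. rewrite <- csum_mul_l, H by auto.
    destruct (Nat.eqb_spec s r); [lia|]. Cring.
Qed.

Lemma outcome_prob_nonneg din dout k T rho N :
  CP din dout T -> PSD (din * k) rho -> PSD (dout * k) N -> 0 <= outcome_prob din dout k T rho N.
Proof. intros HT Hrho HN. apply mtrace_mmul_PSD; auto. Qed.

Lemma outcome_prob_sum din dout k T rho m M :
  TP din dout T -> state (din * k) rho -> POVM (dout * k) m M ->
  rsum m (fun y => outcome_prob din dout k T rho (M y)) = 1.
Proof.
  intros HT [_ Htr] HM. unfold outcome_prob.
  rewrite <- Re_csum, POVM_mtrace_sum, tens_id_trace, Htr by auto. reflexivity.
Qed.

Lemma outcome_prob_lin din dout k n T (Ts : nat -> LMap) (v : nat -> R) rho N :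
  (forall X i j, (i < dout)%nat -> (j < dout)%nat ->
     apply din T X i j = csum n (fun y => Cmul (RtoC (v y)) (apply din (Ts y) X i j))) ->
  outcome_prob din dout k T rho N = rsum n (fun y => v y * outcome_prob din dout k (Ts y) rho N).
Proof.
  intros H. unfold outcome_prob.
  assert (E : mtrace (dout * k) (mmul (dout * k) (tens_id din k T rho) N) =
     csum n (fun y => Cmul (RtoC (v y))
       (mtrace (dout * k) (mmul (dout * k) (tens_id din k (Ts y) rho) N)))).
  { unfold mtrace, mmul. symmetry.
    transitivity (csum n (fun y => csum (dout * k) (fun r => csum (dout * k) (fun s =>
      Cmul (Cmul (RtoC (v y)) (tens_id din k (Ts y) rho r s)) (N s r))))).
    { apply csum_ext; intros y Hy. rewrite csum_mul_l. apply csum_ext; intros r Hr.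
      rewrite csum_mul_l. apply csum_ext; intros; Cring. }
    rewrite csum_swap. apply csum_ext; intros r Hr. rewrite csum_swap. apply csum_ext; intros s Hs.
    unfold tens_id. rewrite H, csum_mul_r by (apply div_lt_block; auto). reflexivity. }
  rewrite E, Re_csum. apply rsum_ext; intros. Csimpl. ring.
Qed.
(** * Monotonicity of the classical Fisher information *)

(* The finite part of [Jterm]; at [p = 0] it is only used when [d = 0]. *)
Definition jterm (p d : R) : R := if Req_dec_T p 0 then 0 else d * d / p.

Lemma jterm_nonneg p d : 0 <= p -> 0 <= jterm p d.
Proof.
  intros. unfold jterm. destruct (Req_dec_T p 0); [lra|].
  apply Rmult_le_pos; [nra | apply Rlt_le, Rinv_0_lt_compat; lra].
Qed.

Lemma jterm_scale c p d : 0 <= c -> (p = 0 -> d = 0) -> jterm (c * p) (c * d) = c * jterm p d.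
Proof.
  intros Hc Hpd. unfold jterm.
  destruct (Req_dec_T (c * p) 0) as [E|E]; destruct (Req_dec_T p 0).
  - ring.
  - destruct (Rmult_integral _ _ E); [subst; ring | contradiction].
  - subst. rewrite Rmult_0_r in E. contradiction.
  - assert (c <> 0) by (intro; subst; apply E; ring). field. auto.
Qed.

Lemma Jfun_ext n p d p' d' : (forall y, (y < n)%nat -> p y = p' y) ->
  (forall y, (y < n)%nat -> d y = d' y) -> Jfun n p d = Jfun n p' d'.
Proof. induction n; simpl; intros; auto. rewrite IHn, H, H0 by (auto; lia). auto. Qed.

Lemma Jfun_finite n p d : (forall y, (y < n)%nat -> p y = 0 -> d y = 0) ->
  Jfun n p d = Fin (rsum n (fun y => jterm (p y) (d y))).
Proof.
  induction n; intros; simpl; auto.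
  rewrite IHn by auto. unfold Jterm, jterm.
  destruct (Req_dec_T (p n) 0); [|reflexivity].
  rewrite H by (auto; lia). destruct (Req_dec_T 0 0); [|lra]. simpl. f_equal; lra.
Qed.

Lemma Jfun_finite_support n p d x : Jfun n p d = Fin x ->
  forall y, (y < n)%nat -> p y = 0 -> d y = 0.
Proof.
  revert x. induction n; simpl; intros; [lia|].
  destruct (Jfun n p d) eqn:E; [|discriminate].
  unfold Jterm in H. destruct (Req_dec_T (p n) 0).
  - destruct (Req_dec_T (d n) 0); [|discriminate].
    destruct (Nat.eq_dec y n); [subst; auto|]. apply (IHn r); auto. lia.
  - destruct (Nat.eq_dec y n); [subst; lra|]. apply (IHn r); auto. lia.
Qed.

(* Joint convexity of [(p, d) |-> d^2 / p] on sums: each term dominates its tangent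
   [2 t d - t^2 p] at the slope [t = sum d / sum p]. *)
Lemma jterm_rsum_le n (p d : nat -> R) : (forall y, (y < n)%nat -> 0 <= p y) ->
  (forall y, (y < n)%nat -> p y = 0 -> d y = 0) ->
  jterm (rsum n p) (rsum n d) <= rsum n (fun y => jterm (p y) (d y)).
Proof.
  intros Hp Hpd.
  assert (0 <= rsum n p) by (apply rsum_nonneg; auto).
  assert (0 <= rsum n (fun y => jterm (p y) (d y)))
    by (apply rsum_nonneg; intros; apply jterm_nonneg; auto).
  unfold jterm at 1. destruct (Req_dec_T (rsum n p) 0); auto.
  set (P := rsum n p) in *. set (D := rsum n d). set (t := D / P).
  assert (Ht : forall y, (y < n)%nat -> 2 * t * d y + - (t * t) * p y <= jterm (p y) (d y)).
  { intros y Hy. unfold jterm. destruct (Req_dec_T (p y) 0).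
    - rewrite e, Hpd by auto. lra.
    - assert (0 < p y) by (specialize (Hp y Hy); lra).
      assert (0 <= (d y - t * p y) * (d y - t * p y) / p y).
      { apply Rmult_le_pos; [apply Rle_0_sqr | apply Rlt_le, Rinv_0_lt_compat; lra]. }
      replace (d y * d y / p y) with (2 * t * d y + - (t * t) * p y
        + (d y - t * p y) * (d y - t * p y) / p y) by (field; lra).
      lra. }
  pose proof (rsum_le n _ _ Ht) as Hsum.
  rewrite rsum_add, !rsum_scal in Hsum. fold P D in Hsum.
  replace (D * D / P) with (2 * t * D + - (t * t) * P) by (unfold t; field; auto).
  lra.
Qed.

Lemma Jfun_stochastic_le n m (p d : nat -> R) (c : nat -> nat -> R) :
  (forall y, (y < n)%nat -> 0 <= p y) ->
  (forall y z, (y < n)%nat -> (z < m)%nat -> 0 <= c y z) ->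
  (forall y, (y < n)%nat -> rsum m (fun z => c y z) <= 1) ->
  ERle (Jfun m (fun z => rsum n (fun y => p y * c y z)) (fun z => rsum n (fun y => d y * c y z)))
       (Jfun n p d).
Proof.
  intros Hp Hc Hs.
  destruct (Jfun n p d) as [x|] eqn:E; [|destruct (Jfun m _ _); simpl; auto].
  pose proof (Jfun_finite_support n p d x E) as Hz.
  rewrite Jfun_finite in E by auto. injection E as <-.
  assert (Hprod : forall y z, (y < n)%nat -> (z < m)%nat -> p y * c y z = 0 -> d y * c y z = 0).
  { intros y z Hy _ H0. destruct (Rmult_integral _ _ H0) as [H1|H1].
    - rewrite Hz; auto; lra.
    - rewrite H1; lra. }
  rewrite Jfun_finite; simpl.
  2:{ intros z Hz' H0. apply rsum_zero. intros y Hy. apply Hprod; auto.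
      apply (rsum_nonneg_eq0 n (fun y => p y * c y z)); auto.
      intros. apply Rmult_le_pos; auto. }
  apply Rle_trans with (rsum m (fun z => rsum n (fun y => c y z * jterm (p y) (d y)))).
  { apply rsum_le; intros z Hz'.
    eapply Rle_trans; [apply jterm_rsum_le|].
    - intros. apply Rmult_le_pos; auto.
    - intros. apply Hprod; auto.
    - right. apply rsum_ext; intros y Hy.
      rewrite !(Rmult_comm _ (c y z)). apply jterm_scale; auto. }
  rewrite rsum_swap. apply rsum_le; intros y Hy.
  rewrite (rsum_ext m _ (fun z => jterm (p y) (d y) * c y z)) by (intros; ring).
  rewrite rsum_scal. rewrite <- (Rmult_1_r (jterm (p y) (d y))) at 2.
  apply Rmult_le_compat_l; auto. apply jterm_nonneg; auto.
Qed.
(** * Restricting a channel to one classical input *)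

Definition kronecker (y : nat) : nat -> R := fun z => if Nat.eqb z y then 1 else 0.

(* [chan_slice n L y] is [X |-> L (X (x) |y><y|)]. *)
Definition chan_slice (n : nat) (L : LMap) (y : nat) : LMap :=
  fun i j k l => L i j (k * n + y)%nat (l * n + y)%nat.

Lemma ten_diag_block n X v k l y1 y2 : (y1 < n)%nat -> (y2 < n)%nat ->
  ten_diag n X v (k * n + y1)%nat (l * n + y2)%nat =
  if Nat.eqb y1 y2 then Cmul (X k l) (RtoC (v y1)) else C0.
Proof. intros. unfold ten_diag. rewrite !div_block, !mod_block by auto. reflexivity. Qed.

Lemma apply_ten_diag din n L X v i j :
  apply (din * n) L (ten_diag n X v) i j =
  csum n (fun y => Cmul (RtoC (v y)) (apply din (chan_slice n L y) X i j)).
Proof.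
  unfold apply. rewrite csum_block.
  transitivity (csum din (fun k => csum n (fun y => csum din (fun l =>
      Cmul (L i j (k * n + y)%nat (l * n + y)%nat) (Cmul (X k l) (RtoC (v y))))))).
  { apply csum_ext; intros k Hk. apply csum_ext; intros y1 Hy1.
    rewrite csum_block. apply csum_ext; intros l Hl.
    rewrite (csum_single n y1); auto.
    - rewrite ten_diag_block, Nat.eqb_refl by auto. reflexivity.
    - intros y2 Hy2 Hne. rewrite ten_diag_block by auto.
      destruct (Nat.eqb_spec y1 y2); [lia|]. Cring. }
  rewrite csum_swap. apply csum_ext; intros y Hy.
  unfold chan_slice. rewrite csum_mul_l. apply csum_ext; intros k Hk.
  rewrite csum_mul_l. apply csum_ext; intros l Hl. Cring.
Qed.

Lemma mtrace_ten_diag_kronecker din n X y : (y < n)%nat ->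
  mtrace (din * n) (ten_diag n X (kronecker y)) = mtrace din X.
Proof.
  intros Hy. unfold mtrace. rewrite csum_block. apply csum_ext; intros i Hi.
  rewrite (csum_single n y); auto.
  - rewrite ten_diag_block, Nat.eqb_refl by auto. unfold kronecker. rewrite Nat.eqb_refl. Cring.
  - intros z Hz Hzy. rewrite ten_diag_block, Nat.eqb_refl by auto. unfold kronecker.
    destruct (Nat.eqb_spec z y); [lia|]. Cring.
Qed.

Lemma chan_slice_TP din dout n L y : (y < n)%nat -> TP (din * n) dout L ->
  TP din dout (chan_slice n L y).
Proof.
  intros Hy HL X. rewrite <- (mtrace_ten_diag_kronecker din n X y Hy), <- HL.
  unfold mtrace. apply csum_ext; intros i Hi. rewrite apply_ten_diag.
  rewrite (csum_single n y); auto.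
  - unfold kronecker. rewrite Nat.eqb_refl. Cring.
  - intros z Hz Hzy. unfold kronecker. destruct (Nat.eqb_spec z y); [lia|]. Cring.
Qed.

(* [rho (x) |y><y|] on [C^din (x) C^n (x) C^k], with the classical register in the middle. *)
Definition slice_input (n k y : nat) (rho : Mat) : Mat := fun p q =>
  ten_diag n (fun i j => rho (i * k + p mod k)%nat (j * k + q mod k)%nat) (kronecker y)
    (p / k)%nat (q / k)%nat.

Lemma apply_ext d T X X' i j : (forall a b, (a < d)%nat -> (b < d)%nat -> X a b = X' a b) ->
  apply d T X i j = apply d T X' i j.
Proof. intros. unfold apply. apply csum_ext; intros. apply csum_ext; intros. rewrite H; auto. Qed.

Lemma tens_id_chan_slice din dout n k y rho L r s :
  (y < n)%nat -> (r < dout * k)%nat -> (s < dout * k)%nat ->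
  tens_id din k (chan_slice n L y) rho r s = tens_id (din * n) k L (slice_input n k y rho) r s.
Proof.
  intros Hy Hr Hs. pose proof (mod_lt_block _ _ _ Hr). pose proof (mod_lt_block _ _ _ Hs).
  unfold tens_id at 2.
  rewrite (apply_ext _ _ _
    (ten_diag n (fun i j => rho (i * k + r mod k)%nat (j * k + s mod k)%nat) (kronecker y))).
  2:{ intros. unfold slice_input. rewrite !div_block, !mod_block by auto. reflexivity. }
  rewrite apply_ten_diag, (csum_single n y); auto.
  - unfold kronecker. rewrite Nat.eqb_refl. unfold tens_id. Cring.
  - intros z Hz Hzy. unfold kronecker. destruct (Nat.eqb_spec z y); [lia|]. Cring.
Qed.

Lemma slice_input_hermitian din n k y rho : (y < n)%nat -> Hermitian (din * k) rho ->
  Hermitian (din * n * k) (slice_input n k y rho).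
Proof.
  intros Hy HH p q Hp Hq.
  pose proof (div_lt_block _ _ _ Hp) as Hp1. pose proof (div_lt_block _ _ _ Hq) as Hq1.
  pose proof (div_lt_block _ _ _ Hp1). pose proof (div_lt_block _ _ _ Hq1).
  pose proof (mod_lt_block _ _ _ Hp). pose proof (mod_lt_block _ _ _ Hq).
  unfold slice_input, ten_diag.
  destruct (Nat.eqb_spec ((p / k) mod n) ((q / k) mod n)) as [E|E].
  - rewrite E, Nat.eqb_refl, HH by (apply block_lt; auto). Cring.
  - destruct (Nat.eqb_spec ((q / k) mod n) ((p / k) mod n)); [lia|]. Cring.
Qed.

Lemma sesq_slice_input din n k y rho v : (y < n)%nat ->
  sesq (din * n * k) (slice_input n k y rho) v v =
  sesq (din * k) rho (fun p => v (((p / k) * n + y) * k + p mod k)%nat)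
                     (fun p => v (((p / k) * n + y) * k + p mod k)%nat).
Proof.
  intros Hy. rewrite !sesq_block. apply csum_ext; intros a Ha. apply csum_ext; intros b Hb.
  rewrite (sesq_ext (din * n) _
             (ten_diag n (fun i j => rho (i * k + a)%nat (j * k + b)%nat) (kronecker y))
             _ (fun i => v (i * k + a)%nat) _ (fun j => v (j * k + b)%nat)).
  2:{ intros. unfold slice_input. rewrite !div_block, !mod_block by auto. reflexivity. }
  2,3: intros; reflexivity.
  rewrite sesq_block, (csum_single n y); auto.
  - rewrite (csum_single n y); auto.
    + apply sesq_ext.
      * intros. rewrite ten_diag_block, Nat.eqb_refl by auto.
        unfold kronecker. rewrite Nat.eqb_refl. Cring.
      * intros. rewrite div_block, mod_block by auto. reflexivity.
      * intros. rewrite div_block, mod_block by auto. reflexivity.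
    + intros z Hz Hzy. apply sesq_zero. intros. rewrite ten_diag_block by auto.
      unfold kronecker. destruct (Nat.eqb_spec y z); [lia|]. destruct (Nat.eqb_spec z y); [lia|]. Cring.
  - intros z Hz Hzy. apply csum_zero; intros z' Hz'. apply sesq_zero. intros.
    rewrite ten_diag_block by auto. unfold kronecker.
    destruct (Nat.eqb_spec z z'); [subst; destruct (Nat.eqb_spec z' y); [lia|] |]; Cring.
Qed.

Lemma chan_slice_CP din dout n L y : (y < n)%nat -> CP (din * n) dout L ->
  CP din dout (chan_slice n L y).
Proof.
  intros Hy HL k rho [HH HQ].
  apply (PSD_ext _ (tens_id (din * n) k L (slice_input n k y rho))).
  { intros. symmetry. apply (tens_id_chan_slice din dout); auto. }
  apply HL. split.
  - apply slice_input_hermitian; auto.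
  - intros v. fold (sesq (din * n * k) (slice_input n k y rho) v v).
    rewrite sesq_slice_input by auto. apply HQ.
Qed.
(** * Pauli channels, Bell states and the controlled-Pauli channel *)

Lemma lt2_cases i : (i < 2)%nat -> i = 0%nat \/ i = 1%nat.
Proof. lia. Qed.

Lemma lt4_cases i : (i < 4)%nat -> i = 0%nat \/ i = 1%nat \/ i = 2%nat \/ i = 3%nat.
Proof. lia. Qed.

Lemma lt8_cases k : (k < 8)%nat -> k = 0%nat \/ k = 1%nat \/ k = 2%nat \/ k = 3%nat \/
  k = 4%nat \/ k = 5%nat \/ k = 6%nat \/ k = 7%nat.
Proof. lia. Qed.

Definition pauli_conj (y : nat) : LMap := fun i j k l => Cmul (pauli y i k) (pauli y l j).

Lemma pauli_hermitian y j l : (y < 4)%nat -> (j < 2)%nat -> (l < 2)%nat ->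
  pauli y l j = Cconj (pauli y j l).
Proof.
  intros Hy Hj Hl. destruct (lt4_cases y Hy) as [ -> | [ -> | [ -> | -> ] ] ];
  destruct (lt2_cases j Hj) as [ -> | -> ]; destruct (lt2_cases l Hl) as [ -> | -> ]; Cring.
Qed.

Lemma pauli_conj_CP y : (y < 4)%nat -> CP 2 2 (pauli_conj y).
Proof.
  intros Hy. apply (kraus_CP 2 2 1 _ (fun _ => pauli y)).
  intros i j k l Hi Hj Hk Hl. unfold pauli_conj. simpl. rewrite (pauli_hermitian y j l) by auto. Cring.
Qed.

Lemma pauli_conj_TP y : (y < 4)%nat -> TP 2 2 (pauli_conj y).
Proof.
  intros Hy X. destruct (lt4_cases y Hy) as [ -> | [ -> | [ -> | -> ] ] ];
  unfold mtrace, apply, pauli_conj; simpl; Cring.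
Qed.

Lemma pauli_chan_decomp q X i j :
  apply 2 (pauli_chan q) X i j = csum 4 (fun y => Cmul (RtoC (q y)) (apply 2 (pauli_conj y) X i j)).
Proof.
  unfold apply. symmetry.
  transitivity (csum 4 (fun y => csum 2 (fun k => csum 2 (fun l =>
     Cmul (Cmul (Cmul (RtoC (q y)) (pauli y i k)) (pauli y l j)) (X k l))))).
  { apply csum_ext; intros y Hy. rewrite csum_mul_l. apply csum_ext; intros k Hk.
    rewrite csum_mul_l. apply csum_ext; intros l Hl. unfold pauli_conj. Cring. }
  rewrite csum_swap. apply csum_ext; intros k Hk. rewrite csum_swap. apply csum_ext; intros l Hl.
  unfold pauli_chan. rewrite csum_mul_r. reflexivity.
Qed.

(* The Bell basis of [C^2 (x) C^2] consists of the vectorised Paulis [vec(sigma_y) / sqrt 2]. *)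
Definition bell_vec (y r : nat) : C := pauli y (r / 2)%nat (r mod 2)%nat.
Definition bell_proj (y : nat) : Mat :=
  fun r s => Cmul (RtoC (/ 2)) (Cmul (bell_vec y r) (Cconj (bell_vec y s))).
Definition bell_state : Mat := bell_proj 0.

Lemma bell_proj_PSD y : PSD 4 (bell_proj y).
Proof. apply rank1_PSD. lra. Qed.

Lemma bell_state_state : state (2 * 2) bell_state.
Proof.
  split; [apply bell_proj_PSD|].
  unfold bell_state, bell_proj, mtrace, bell_vec. simpl. apply C_ext; Csimpl; lra.
Qed.

Lemma bell_POVM : POVM (2 * 2) 4 bell_proj.
Proof.
  split; [intros; apply bell_proj_PSD|].
  intros i j Hi Hj.
  destruct (lt4_cases i Hi) as [ -> | [ -> | [ -> | -> ] ] ];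
  destruct (lt4_cases j Hj) as [ -> | [ -> | [ -> | -> ] ] ];
  unfold bell_proj, bell_vec; simpl; apply C_ext; Csimpl; lra.
Qed.

Lemma bell_overlap y y' : (y < 4)%nat -> (y' < 4)%nat ->
  outcome_prob 2 2 2 (pauli_conj y) bell_state (bell_proj y') = if Nat.eqb y y' then 1 else 0.
Proof.
  intros Hy Hy'.
  destruct (lt4_cases y Hy) as [ -> | [ -> | [ -> | -> ] ] ];
  destruct (lt4_cases y' Hy') as [ -> | [ -> | [ -> | -> ] ] ];
  unfold outcome_prob, mtrace, mmul, tens_id, apply, pauli_conj, bell_state, bell_proj, bell_vec;
  simpl; lra.
Qed.

Lemma bell_outcome_prob v y' : (y' < 4)%nat ->
  outcome_prob 2 2 2 (pauli_chan v) bell_state (bell_proj y') = v y'.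
Proof.
  intros Hy'. rewrite (outcome_prob_lin 2 2 2 4 _ pauli_conj v) by (intros; apply pauli_chan_decomp).
  rewrite (rsum_ext 4 _ (fun y => v y * if Nat.eqb y y' then 1 else 0)).
  - apply rsum_single; auto.
  - intros y Hy. rewrite bell_overlap; auto.
Qed.

(* Kraus operators [sigma_t (x) <t|] of the channel [X (x) |y><y| |-> sigma_y X sigma_y]. *)
Definition ctrl_pauli_kraus (t : nat) : Mat :=
  fun i k => if Nat.eqb (k mod 4) t then pauli t i (k / 4)%nat else C0.
Definition ctrl_pauli : LMap :=
  fun i j k l => csum 4 (fun t => Cmul (ctrl_pauli_kraus t i k) (Cconj (ctrl_pauli_kraus t j l))).

Lemma ctrl_pauli_CP : CP (2 * 4) 2 ctrl_pauli.
Proof. apply (kraus_CP _ _ 4 _ ctrl_pauli_kraus). intros i j k l _ _ _ _. reflexivity. Qed.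

Lemma ctrl_pauli_partial_trace k l : (k < 8)%nat -> (l < 8)%nat ->
  csum 2 (fun i => ctrl_pauli i i k l) = if Nat.eqb k l then C1 else C0.
Proof.
  intros Hk Hl.
  destruct (lt8_cases k Hk) as [ -> | [ -> | [ -> | [ -> | [ -> | [ -> | [ -> | -> ] ] ] ] ] ] ];
  destruct (lt8_cases l Hl) as [ -> | [ -> | [ -> | [ -> | [ -> | [ -> | [ -> | -> ] ] ] ] ] ] ];
  unfold ctrl_pauli, ctrl_pauli_kraus; simpl; Cring.
Qed.

Lemma ctrl_pauli_TP : TP (2 * 4) 2 ctrl_pauli.
Proof.
  intros X. unfold mtrace, apply.
  transitivity (csum (2 * 4) (fun k => csum (2 * 4) (fun l =>
    Cmul (csum 2 (fun i => ctrl_pauli i i k l)) (X k l)))).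
  { rewrite csum_swap. apply csum_ext; intros k Hk. rewrite csum_swap. apply csum_ext; intros l Hl.
    rewrite csum_mul_r. reflexivity. }
  apply csum_ext; intros k Hk. rewrite (csum_single _ k); auto.
  - rewrite ctrl_pauli_partial_trace, Nat.eqb_refl by auto. Cring.
  - intros l Hl Hlk. rewrite ctrl_pauli_partial_trace by auto.
    destruct (Nat.eqb_spec k l); [lia|]. Cring.
Qed.

Lemma chan_slice_ctrl_pauli y X i j : (y < 4)%nat -> (i < 2)%nat -> (j < 2)%nat ->
  apply 2 (chan_slice 4 ctrl_pauli y) X i j = apply 2 (pauli_conj y) X i j.
Proof.
  intros Hy Hi Hj. unfold apply. apply csum_ext; intros k Hk. apply csum_ext; intros l Hl.
  f_equal. unfold chan_slice, ctrl_pauli, pauli_conj.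
  rewrite (csum_single 4 y); auto.
  - unfold ctrl_pauli_kraus. rewrite !div_block, !mod_block, Nat.eqb_refl by lia.
    rewrite (pauli_hermitian y j l) by auto. Cring.
  - intros t Ht Hne. unfold ctrl_pauli_kraus. rewrite !mod_block by lia.
    destruct (Nat.eqb_spec y t); [lia|]. Cring.
Qed.

Lemma pauli_chan_ctrl_pauli q X i j : (i < 2)%nat -> (j < 2)%nat ->
  apply 2 (pauli_chan q) X i j = apply (2 * 4) ctrl_pauli (ten_diag 4 X q) i j.
Proof.
  intros Hi Hj. rewrite apply_ten_diag, pauli_chan_decomp. apply csum_ext; intros y Hy.
  rewrite chan_slice_ctrl_pauli by auto. reflexivity.
Qed.

(** * Derivatives of Pauli channels *)

Lemma derivable_pt_lim_rsum n (g : R -> nat -> R) (dg c : nat -> R) th :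
  (forall y, (y < n)%nat -> derivable_pt_lim (fun t => g t y) th (dg y)) ->
  derivable_pt_lim (fun t => rsum n (fun y => g t y * c y)) th (rsum n (fun y => dg y * c y)).
Proof.
  induction n; simpl; intros H.
  - exact (derivable_pt_lim_const 0 th).
  - change (fun t => rsum n (fun y => g t y * c y) + g t n * c n) with
      (plus_fct (fun t => rsum n (fun y => g t y * c y)) (fun t => g t n * c n)).
    apply derivable_pt_lim_plus; [apply IHn; intros; apply H; lia|].
    replace (fun t => g t n * c n) with (mult_real_fct (c n) (fun t => g t n))
      by (apply functional_extensionality; intros; unfold mult_real_fct; ring).
    rewrite Rmult_comm. apply derivable_pt_lim_scal. apply H; lia.
Qed.

Lemma derivable_pt_lim_rsum_unique n g dg c th f l :
  (forall y, (y < n)%nat -> derivable_pt_lim (fun t => g t y) th (dg y)) ->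
  (forall t, f t = rsum n (fun y => g t y * c y)) ->
  derivable_pt_lim f th l -> l = rsum n (fun y => dg y * c y).
Proof.
  intros Hg Hf Hl.
  replace f with (fun t => rsum n (fun y => g t y * c y)) in Hl
    by (apply functional_extensionality; intros; auto).
  exact (uniqueness_limite _ _ _ _ Hl (derivable_pt_lim_rsum n g dg c th Hg)).
Qed.

Lemma rsum_derivative_eq0 n (qt : R -> nat -> R) dq th :
  (forall t, rsum n (qt t) = 1) ->
  (forall y, (y < n)%nat -> derivable_pt_lim (fun t => qt t y) th (dq y)) ->
  rsum n dq = 0.
Proof.
  intros Hsum Hq.
  rewrite (rsum_ext n _ (fun y => dq y * 1)) by (intros; ring).
  symmetry. apply (derivable_pt_lim_rsum_unique n qt dq (fun _ => 1) th (fun _ => 1)); auto.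
  - intros t. transitivity (rsum n (qt t)); [auto | apply rsum_ext; intros; ring].
  - apply derivable_pt_lim_const.
Qed.

Lemma Re_pauli_chan q X i j :
  Re (apply 2 (pauli_chan q) X i j) = rsum 4 (fun y => q y * Re (apply 2 (pauli_conj y) X i j)).
Proof. rewrite pauli_chan_decomp, Re_csum. apply rsum_ext; intros. Csimpl. ring. Qed.

Lemma Im_pauli_chan q X i j :
  Im (apply 2 (pauli_chan q) X i j) = rsum 4 (fun y => q y * Im (apply 2 (pauli_conj y) X i j)).
Proof. rewrite pauli_chan_decomp, Im_csum. apply rsum_ext; intros. Csimpl. ring. Qed.

Lemma pauli_chan_derivative (qt : R -> nat -> R) dq (Delta : LMap) th :
  (forall y, (y < 4)%nat -> derivable_pt_lim (fun t => qt t y) th (dq y)) ->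
  (forall X i j, (i < 2)%nat -> (j < 2)%nat ->
     derivable_pt_lim (fun t => Re (apply 2 (pauli_chan (qt t)) X i j)) th (Re (apply 2 Delta X i j)) /\
     derivable_pt_lim (fun t => Im (apply 2 (pauli_chan (qt t)) X i j)) th (Im (apply 2 Delta X i j))) ->
  forall X, meq 2 (apply 2 Delta X) (apply 2 (pauli_chan dq) X).
Proof.
  intros Hq HD X i j Hi Hj. destruct (HD X i j Hi Hj) as [HRe HIm]. apply C_ext.
  - rewrite Re_pauli_chan.
    exact (derivable_pt_lim_rsum_unique 4 qt dq _ th _ _ Hq (fun t => Re_pauli_chan (qt t) X i j) HRe).
  - rewrite Im_pauli_chan.
    exact (derivable_pt_lim_rsum_unique 4 qt dq _ th _ _ Hq (fun t => Im_pauli_chan (qt t) X i j) HIm).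
Qed.

(** * The two Fisher informations of a Pauli channel *)

Lemma is_sup_of_max S v : S v -> (forall x, S x -> ERle x v) -> is_sup S v.
Proof. intros Hv Hub. split; [exact Hub|]. intros u Hu. exact (Hu v Hv). Qed.

Lemma is_inf_of_min S v : S v -> (forall x, S x -> ERle v x) -> is_inf S v.
Proof. intros Hv Hlb. split; [exact Hlb|]. intros u Hu. exact (Hu v Hv). Qed.

Lemma outcome_prob_ext din dout k T T' rho N :
  (forall X, meq dout (apply din T X) (apply din T' X)) ->
  outcome_prob din dout k T rho N = outcome_prob din dout k T' rho N.
Proof.
  intros H. unfold outcome_prob, mtrace, mmul. f_equal.
  apply csum_ext; intros r Hr. apply csum_ext; intros s Hs.
  unfold tens_id. rewrite H by (apply div_lt_block; auto). reflexivity.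
Qed.

Section PauliFisher.
Variables (q delta : nat -> R) (Delta : LMap).
Hypothesis Hq : probdist 4 q.
Hypothesis HDelta : forall X, meq 2 (apply 2 Delta X) (apply 2 (pauli_chan delta) X).

(* Every measurement statistic of [(Lambda_q, Delta)] is a post-processing of [(q, delta)]
   through the outcome probabilities [c y z] of [M] on [(sigma_y (x) 1) rho (sigma_y (x) 1)]. *)
Lemma Gmin_values_le x : Gmin_values 2 2 (pauli_chan q) Delta x -> ERle x (Jfun 4 q delta).
Proof.
  intros (k & rho & m & M & Hrho & HM & ->).
  set (c := fun y z => outcome_prob 2 2 k (pauli_conj y) rho (M z)).
  rewrite (Jfun_ext m _ _ (fun z => rsum 4 (fun y => q y * c y z))
                          (fun z => rsum 4 (fun y => delta y * c y z))).
  - apply Jfun_stochastic_le.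
    + apply Hq.
    + intros y z Hy Hz. apply outcome_prob_nonneg; [apply pauli_conj_CP | apply Hrho | apply HM]; auto.
    + intros y Hy. right. apply outcome_prob_sum; auto. apply pauli_conj_TP; auto.
  - intros z Hz. apply (outcome_prob_lin 2 2 k 4 (pauli_chan q) pauli_conj q rho (M z)).
    intros; apply pauli_chan_decomp.
  - intros z Hz. fold (outcome_prob 2 2 k Delta rho (M z)).
    rewrite (outcome_prob_ext _ _ _ _ _ _ _ HDelta).
    apply (outcome_prob_lin 2 2 k 4 (pauli_chan delta) pauli_conj delta rho (M z)).
    intros; apply pauli_chan_decomp.
Qed.

Lemma Gmin_values_attained : Gmin_values 2 2 (pauli_chan q) Delta (Jfun 4 q delta).
Proof.
  exists 2%nat, bell_state, 4%nat, bell_proj.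
  split; [exact bell_state_state|]. split; [exact bell_POVM|].
  apply Jfun_ext; intros z Hz.
  - symmetry. apply (bell_outcome_prob q z Hz).
  - fold (outcome_prob 2 2 2 Delta bell_state (bell_proj z)).
    rewrite (outcome_prob_ext _ _ _ _ _ _ _ HDelta), bell_outcome_prob; auto.
Qed.

(* Feeding the Bell state to a simulation and measuring in the Bell basis recovers
   [(q, delta)] as a post-processing of the simulation's [(q', delta')]. *)
Lemma Gmax_values_ge x : Gmax_values 2 2 (pauli_chan q) Delta x -> ERle (Jfun 4 q delta) x.
Proof.
  intros (n & q' & d' & L & (Hq' & _ & [HCP HTP] & Hsim & Hsimd) & ->).
  set (c := fun y z => outcome_prob 2 2 2 (chan_slice n L y) bell_state (bell_proj z)).
  rewrite (Jfun_ext 4 q delta (fun z => rsum n (fun y => q' y * c y z))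
                              (fun z => rsum n (fun y => d' y * c y z))).
  - apply Jfun_stochastic_le.
    + apply Hq'.
    + intros y z Hy Hz. apply outcome_prob_nonneg.
      * apply chan_slice_CP; auto.
      * apply bell_state_state.
      * apply bell_proj_PSD.
    + intros y Hy. right.
      apply outcome_prob_sum; [apply chan_slice_TP; auto | apply bell_state_state | apply bell_POVM].
  - intros z Hz. rewrite <- (bell_outcome_prob q z Hz).
    apply (outcome_prob_lin 2 2 2 n (pauli_chan q) (chan_slice n L) q' bell_state (bell_proj z)).
    intros X i j Hi Hj. rewrite (Hsim X i j Hi Hj). apply apply_ten_diag.
  - intros z Hz.
    rewrite <- (bell_outcome_prob delta z Hz), <- (outcome_prob_ext _ _ _ _ _ _ _ HDelta).
    apply (outcome_prob_lin 2 2 2 n Delta (chan_slice n L) d' bell_state (bell_proj z)).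
    intros X i j Hi Hj. rewrite (Hsimd X i j Hi Hj). apply apply_ten_diag.
Qed.

Lemma Gmax_values_attained : rsum 4 delta = 0 ->
  Gmax_values 2 2 (pauli_chan q) Delta (Jfun 4 q delta).
Proof.
  intros Hd0. exists 4%nat, q, delta, ctrl_pauli. split; [|reflexivity].
  split; [exact Hq|]. split; [exact Hd0|].
  split; [split; [exact ctrl_pauli_CP | exact ctrl_pauli_TP]|].
  split; intros X i j Hi Hj; [|rewrite HDelta by auto]; apply pauli_chan_ctrl_pauli; auto.
Qed.

Lemma Gmin_is_pauli_chan : Gmin_is 2 2 (pauli_chan q) Delta (Jfun 4 q delta).
Proof. apply is_sup_of_max; [apply Gmin_values_attained | apply Gmin_values_le]. Qed.

Lemma Gmax_is_pauli_chan : rsum 4 delta = 0 -> Gmax_is 2 2 (pauli_chan q) Delta (Jfun 4 q delta).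
Proof. intros. apply is_inf_of_min; [apply Gmax_values_attained; auto | apply Gmax_values_ge]. Qed.

End PauliFisher.

Lemma qvec_sum a b c : rsum 4 (qvec a b c) = 1.
Proof. unfold qvec. simpl. ring. Qed.

Lemma qvec_probdist a b c : 0 <= a -> 0 <= b -> 0 <= c -> a + b + c <= 1 -> probdist 4 (qvec a b c).
Proof.
  intros. split; [|apply qvec_sum].
  intros y Hy. destruct (lt4_cases y Hy) as [ -> | [ -> | [ -> | -> ] ] ]; simpl; lra.
Qed.

Theorem mainTheorem4 (px py pz : R -> R) (a b theta : R)
  (delta : nat -> R) (Delta : LMap) :
  a < theta < b ->
  (forall t, a < t < b ->
     0 <= px t /\ 0 <= py t /\ 0 <= pz t /\ px t + py t + pz t <= 1) ->
  (forall t, a < t < b ->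
     (exists l, derivable_pt_lim px t l) /\ (exists l, derivable_pt_lim py t l) /\
     (exists l, derivable_pt_lim pz t l)) ->
  (forall y, (y < 4)%nat ->
     derivable_pt_lim (fun t => qvec (px t) (py t) (pz t) y) theta (delta y)) ->
  (forall (X : Mat) (i j : nat), (i < 2)%nat -> (j < 2)%nat ->
     derivable_pt_lim
       (fun t => Re (apply 2 (pauli_chan (qvec (px t) (py t) (pz t))) X i j))
       theta (Re (apply 2 Delta X i j)) /\
     derivable_pt_lim
       (fun t => Im (apply 2 (pauli_chan (qvec (px t) (py t) (pz t))) X i j))
       theta (Im (apply 2 Delta X i j))) ->
  let q := qvec (px theta) (py theta) (pz theta) in
  Gmin_is 2 2 (pauli_chan q) Delta (Jfun 4 q delta) /\
  Gmax_is 2 2 (pauli_chan q) Delta (Jfun 4 q delta).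
Proof.
  intros Hab Hp _ Hdq HdLambda q.
  assert (Hq : probdist 4 q)
    by (destruct (Hp theta Hab) as (? & ? & ? & ?); apply qvec_probdist; auto).
  assert (Hd0 : rsum 4 delta = 0)
    by (apply (rsum_derivative_eq0 4 (fun t => qvec (px t) (py t) (pz t)) delta theta);
        auto; intros; apply qvec_sum).
  pose proof (pauli_chan_derivative (fun t => qvec (px t) (py t) (pz t)) delta Delta theta Hdq HdLambda)
    as HDelta.
  split; [apply Gmin_is_pauli_chan | apply Gmax_is_pauli_chan]; auto.
Qed.
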